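(* Let $\tilde G$ be the infinite heavy-hexagonal graph and let $G$ be a finite subgraph of $\tilde G$. Let $L(G)$ be the interference graph of $G$. If $G$ contains two connected unit cells as a subgraph, then the chromatic number of $L(G)$ equals $6$, i.e. $\chi(L(G))=6$.
   Context: The infinite heavy-hexagonal graph $\tilde G$ is obtained from the infinite hexagonal (honeycomb) lattice by inserting one additional vertex into every edge (subdividing each edge once). A unit cell is the 12-vertex cycle of $\tilde G$ arising from a single hexagonal face of the honeycomb lattice; two unit cells are connected if their hexagons are adjacent (share a side). For a graph $G=(V,E)$ and an edge $e=\{i,j\}\in E$, let $N(e)=(N(i)\setminus\{j\})\cup(N(j)\setminus\{i\})$ be its neighborhood, where $N(v)$ is the set of neighbors of vertex $v$. The interference graph $L(G)$ has one vertex for each edge of $G$, and two distinct edges $e,f$ of $G$ are adjacent in $L(G)$ if they interfere, i.e. if $(e\cup N(e))\cap(f\cup N(f))\neq\emptyset$ (the qubits used by a parallel experiment on $e$, namely its endpoints and its neighboring qubits, overlap with those used for $f$). The chromatic number $\chi$ is the minimum number of colors in a proper vertex coloring. *)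

From HB Require Import structures.
From mathcomp Require Import all_boot all_order all_algebra.
From mathcomp Require Import finmap.
Set Implicit Arguments. Unset Strict Implicit. Unset Printing Implicit Defensive.
Import Order.TTheory GRing.Theory Num.Theory.
Local Open Scope fset_scope.
Local Open Scope ring_scope.

(* The honeycomb lattice is modelled as the "brick wall": vertices      *)
(* (x,y) in Z^2, horizontal edges (x,y)-(x+1,y) for all x,y, vertical    *)
(* edges (x,y)-(x,y+1) iff x+y is even.  Subdividing every edge once,    *)
(* we use doubled coordinates: honeycomb vertex (x,y) becomes (2x,2y),   *)
(* the midpoint of (x,y)-(x+1,y) is (2x+1,2y) and the midpoint of        *)
(* (x,y)-(x,y+1) (x+y even) is (2x,2y+1).                               *)

Definition vtx := (int * int)%type.

Definition hh_vertex (p : vtx) : Prop :=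
  (exists x y : int, p = (2 * x, 2 * y)) \/
  (exists x y : int, p = (2 * x + 1, 2 * y)) \/
  (exists x y k : int, p = (2 * x, 2 * y + 1) /\ x + y = 2 * k).

(* Edges of the heavy-hex graph: two heavy-hex vertices at lattice
   (L1) distance 1; these are exactly the subdivided honeycomb edges. *)
Definition hh_adj (p q : vtx) : Prop :=
  hh_vertex p /\ hh_vertex q /\ `|p.1 - q.1| + `|p.2 - q.2| = 1.

Definition finite_subgraph (V : {fset vtx}) (E : {fset {fset vtx}}) : Prop :=
  (forall v, v \in V -> hh_vertex v) /\
  (forall e, e \in E ->
     exists i j, e = [fset i; j] /\ i \in V /\ j \in V /\ hh_adj i j).

Definition nbr (V : {fset vtx}) (E : {fset {fset vtx}}) (v : vtx) : {fset vtx} :=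
  [fset u in V | [fset u; v] \in E].

Definition edge_nbr (V : {fset vtx}) (E : {fset {fset vtx}}) (i j : vtx) : {fset vtx} :=
  ((nbr V E i `\ j) `|` (nbr V E j `\ i))%fset.

Definition interfere (V : {fset vtx}) (E : {fset {fset vtx}}) (e f : {fset vtx}) : Prop :=
  exists i j k l, e = [fset i; j] /\ f = [fset k; l] /\
    (([fset i; j] `|` edge_nbr V E i j) `&` ([fset k; l] `|` edge_nbr V E k l))%fset != fset0.

Definition colorable (T : choiceType) (W : {fset T}) (R : T -> T -> Prop) (k : nat) : Prop :=
  exists c : T -> nat,
    (forall x, x \in W -> (c x < k)%N) /\
    (forall x y, x \in W -> y \in W -> x <> y -> R x y -> c x <> c y).

Definition chromatic_number (T : choiceType) (W : {fset T}) (R : T -> T -> Prop) (n : nat) : Prop :=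
  colorable W R n /\ (forall k, colorable W R k -> (n <= k)%N).

(* Unit cell attached to the brick (honeycomb face) with lower-left corner
   (x,y), x+y even: its 12-cycle is the boundary of the doubled-coordinate
   rectangle [2x,2x+4] x [2y,2y+2]. *)
Definition is_face (x y : int) : Prop := exists k : int, x + y = 2 * k.

Definition cell_vertex (x y : int) (p : vtx) : Prop :=
  2 * x <= p.1 <= 2 * x + 4 /\ 2 * y <= p.2 <= 2 * y + 2 /\
  (p.1 = 2 * x \/ p.1 = 2 * x + 4 \/ p.2 = 2 * y \/ p.2 = 2 * y + 2).

Definition cell_edge (x y : int) (e : {fset vtx}) : Prop :=
  exists p q, e = [fset p; q] /\ cell_vertex x y p /\ cell_vertex x y q /\
    `|p.1 - q.1| + `|p.2 - q.2| = 1.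

Definition contains_cell (E : {fset {fset vtx}}) (x y : int) : Prop :=
  forall e, cell_edge x y e -> e \in E.

(* G contains two connected unit cells: two distinct faces whose
   hexagons share a side (equivalently, whose 12-cycles share an edge). *)
Definition contains_two_connected_cells (E : {fset {fset vtx}}) : Prop :=
  exists x y x' y' : int,
    is_face x y /\ is_face x' y' /\ (x, y) <> (x', y') /\
    (exists e, cell_edge x y e /\ cell_edge x' y' e) /\
    contains_cell E x y /\ contains_cell E x' y'.

(* Every edge of the heavy-hex graph is the half of a honeycomb edge that is
   incident to a honeycomb vertex (X, Y), its hub, and it leaves the hub in a
   unit direction d.  Colour it by the parity of X + Y (the side of the
   honeycomb bipartition the hub lies on) and by the horizontal component of
   d, which together with that parity determines d: six colours.  Two
   interfering edges have endpoints at L1 distance at most 2 (in doubled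
   coordinates), whereas two distinct half-edges with hubs of the same parity
   and the same direction have all their endpoints at distance at least 3; so
   the colouring is proper.
   Conversely, let u be an endpoint of the side shared by two adjacent unit
   cells.  The two cells contain the three edges at u and their continuations;
   u lies in the closed neighbourhood of each of these six edges, so they
   pairwise interfere. *)

From HB Require Import structures.
From mathcomp Require Import all_boot all_order all_algebra.
From mathcomp Require Import finmap.
From mathcomp Require Import zify.
Set Implicit Arguments. Unset Strict Implicit. Unset Printing Implicit Defensive.
Import Order.TTheory GRing.Theory Num.Theory.
Local Open Scope fset_scope.
Local Open Scope ring_scope.

Lemma fset2_eq (T : choiceType) (a b c d : T) :
  [fset a; b] = [fset c; d] -> (a = c /\ b = d) \/ (a = d /\ b = c).
Proof.
move=> eq_ab_cd.
have a_cd : a \in [fset c; d] by rewrite -eq_ab_cd fset21.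
have b_cd : b \in [fset c; d] by rewrite -eq_ab_cd fset22.
have c_ab : c \in [fset a; b] by rewrite eq_ab_cd fset21.
have d_ab : d \in [fset a; b] by rewrite eq_ab_cd fset22.
move: a_cd b_cd c_ab d_ab => /fset2P[] ? /fset2P[] ? /fset2P[] ? /fset2P[] ?;
  first [left; split; congruence | right; split; congruence].
Qed.

Lemma sum_fset2 (T : choiceType) (M : nmodType) (F : T -> M) (i j : T) :
  i != j -> \sum_(p <- [fset i; j]) F p = F i + F j.
Proof. by move=> nij; rewrite big_fsetU1 ?inE // big_seq_fset1. Qed.

Lemma colorable_clique_size (T : choiceType) (W : {fset T}) (R : T -> T -> Prop)
    (k : nat) (s : seq T) :
  uniq s -> {subset s <= W} -> {in s &, forall x y, x <> y -> R x y} ->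
  colorable W R k -> (size s <= k)%N.
Proof.
move=> s_uniq sW s_clique [c [c_lt c_proper]].
rewrite -(size_map c) -(size_iota 0 k); apply: uniq_leq_size.
  rewrite map_inj_in_uniq // => x y xs ys cxy.
  case: (eqVneq x y) => // /eqP nxy; exfalso.
  exact: c_proper (sW _ xs) (sW _ ys) nxy (s_clique _ _ xs ys nxy) cxy.
by move=> _ /mapP [x xs ->]; rewrite mem_iota add0n c_lt ?sW.
Qed.

(* [edge_at i j X Y d1 d2]: {i, j} is the half, incident to the honeycomb
   vertex (X, Y), of the honeycomb edge leaving (X, Y) in direction (d1, d2);
   [honeycomb_dir] lists the directions available at (X, Y) in the brick-wall
   model. *)
Definition honeycomb_dir (X Y d1 d2 : int) : Prop :=
  (d1 = 1 /\ d2 = 0) \/ (d1 = -1 /\ d2 = 0) \/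
  (d1 = 0 /\ d2 = 1 /\ ((X + Y) %% 2)%Z = 0) \/
  (d1 = 0 /\ d2 = -1 /\ ((X + Y) %% 2)%Z = 1).

Definition edge_at (i j : vtx) (X Y d1 d2 : int) : Prop :=
  (i.1 = 2 * X /\ i.2 = 2 * Y /\ j.1 = 2 * X + d1 /\ j.2 = 2 * Y + d2) \/
  (j.1 = 2 * X /\ j.2 = 2 * Y /\ i.1 = 2 * X + d1 /\ i.2 = 2 * Y + d2).

Lemma honeycomb_dir_unit X Y d1 d2 : honeycomb_dir X Y d1 d2 -> `|d1| + `|d2| = 1.
Proof. by rewrite /honeycomb_dir; lia. Qed.

Lemma hh_vertex_cases (p : vtx) : hh_vertex p ->
  (exists a b : int, p.1 = 2 * a /\ p.2 = 2 * b) \/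
  (exists a b : int, p.1 = 2 * a + 1 /\ p.2 = 2 * b) \/
  (exists a b : int, p.1 = 2 * a /\ p.2 = 2 * b + 1 /\ ((a + b) %% 2)%Z = 0).
Proof.
case=> [[a [b ->]]|[[a [b ->]]|[a [b [k [-> hk]]]]]].
- by left; exists a, b.
- by right; left; exists a, b.
- by right; right; exists a, b; do !split => //; lia.
Qed.

Lemma hh_adj_edge_at (i j : vtx) : hh_adj i j ->
  exists X Y d1 d2, honeycomb_dir X Y d1 d2 /\ edge_at i j X Y d1 d2.
Proof.
rewrite /honeycomb_dir /edge_at => -[/hh_vertex_cases hi [/hh_vertex_cases hj dij]].
case: hi => [[a [b [i1 i2]]]|hi].
  exists a, b, (j.1 - 2 * a), (j.2 - 2 * b).
  by case: hj => [[a' [b' ?]]|[[a' [b' ?]]|[a' [b' ?]]]]; lia.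
case: hj => [[a [b [j1 j2]]]|hj].
  exists a, b, (i.1 - 2 * a), (i.2 - 2 * b).
  by case: hi => [[a' [b' ?]]|[a' [b' ?]]]; lia.
by exfalso; case: hi => [[a [b ?]]|[a [b ?]]]; case: hj => [[a' [b' ?]]|[a' [b' ?]]]; lia.
Qed.

Lemma edge_at_mem (a i j : vtx) X Y d1 d2 :
  edge_at i j X Y d1 d2 -> a \in [fset i; j] ->
  (a.1 = 2 * X /\ a.2 = 2 * Y) \/ (a.1 = 2 * X + d1 /\ a.2 = 2 * Y + d2).
Proof. by rewrite /edge_at => ij_at /fset2P[] ->; lia. Qed.

Lemma edge_at_fset2 i j k l X Y d1 d2 :
  edge_at i j X Y d1 d2 -> edge_at k l X Y d1 d2 -> [fset i; j] = [fset k; l].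
Proof.
move: i j k l => [? ?] [? ?] [? ?] [? ?]; rewrite /edge_at /=.
by case=> -[-> [-> [-> ->]]] [] [-> [-> [-> ->]]] //; rewrite fsetUC.
Qed.

Lemma hh_adj_sym (i j : vtx) : hh_adj i j -> hh_adj j i.
Proof. by case=> hi [hj dij]; do !split => //; lia. Qed.

Lemma hh_adj_of_edge V E (i j : vtx) :
  finite_subgraph V E -> [fset i; j] \in E -> hh_adj i j.
Proof.
case=> _ hE /hE [k [l [/fset2_eq [[-> ->]|[-> ->]] [_ [_ kl]]]]] //.
exact: hh_adj_sym.
Qed.

Lemma edge_end_in V E (u m : vtx) :
  finite_subgraph V E -> [fset u; m] \in E -> u \in V.
Proof. by case=> _ hE /hE [i [j [/fset2_eq [[-> _]|[-> _]] [iV [jV _]]]]]. Qed.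

Definition closed_edge_nbr V E (i j : vtx) : {fset vtx} :=
  [fset i; j] `|` edge_nbr V E i j.

Lemma closed_edge_nbr_near V E (i j w : vtx) :
  finite_subgraph V E -> w \in closed_edge_nbr V E i j ->
  exists2 a : vtx, a \in [fset i; j] & `|a.1 - w.1| + `|a.2 - w.2| <= 1.
Proof.
move=> hG /fsetUP[w_ij|]; first by exists w => //; lia.
have near_nbr (x : vtx) : x \in [fset i; j] -> w \in nbr V E x ->
    exists2 a : vtx, a \in [fset i; j] & `|a.1 - w.1| + `|a.2 - w.2| <= 1.
  move=> x_ij; rewrite !inE => /andP[_ /(hh_adj_of_edge hG) [_ [_ wx]]].
  by exists x => //; lia.
by case/fsetUP => /fsetDP[/near_nbr + _]; apply; rewrite ?fset21 ?fset22.
Qed.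

Lemma mem_closed_edge_nbr_end V E (u m : vtx) : u \in closed_edge_nbr V E u m.
Proof. by rewrite in_fsetU fset21. Qed.

Lemma mem_closed_edge_nbr_nbr V E (u m m' : vtx) :
  u \in V -> [fset u; m] \in E -> u != m' -> u \in closed_edge_nbr V E m m'.
Proof. by move=> uV umE um'; rewrite !inE uV umE um' /= !orbT. Qed.

Lemma interfere_common V E (i j k l u : vtx) :
  u \in closed_edge_nbr V E i j -> u \in closed_edge_nbr V E k l ->
  interfere V E [fset i; j] [fset k; l].
Proof.
move=> u_ij u_kl; exists i, j, k, l; do !split.
by apply/fset0Pn; exists u; apply/fsetIP.
Qed.

Definition dir_index (d1 : int) : nat :=
  if d1 == 1 then 0 else if d1 == -1 then 1 else 2.

Definition hub_color (X Y d1 : int) : nat :=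
  3 * (if ((X + Y) %% 2)%Z == 0 then 0 else 1) + dir_index d1.

(* The coordinate sums of the endpoints of a half-edge at hub (X, Y) in
   direction d are (4 X + d1, 4 Y + d2), from which X, Y and d1 are recovered. *)
Definition mid_color (s1 s2 : int) : nat :=
  let X := ((s1 + 1) %/ 4)%Z in let Y := ((s2 + 1) %/ 4)%Z in
  hub_color X Y (s1 - 4 * X).

Definition edge_color (e : {fset vtx}) : nat :=
  mid_color (\sum_(p <- e) p.1) (\sum_(p <- e) p.2).

Lemma hub_color_lt X Y d1 : (hub_color X Y d1 < 6)%N.
Proof. by rewrite /hub_color /dir_index; repeat case: ifP. Qed.

Lemma hub_color_inj X1 Y1 d1 d2 X2 Y2 e1 e2 :
  honeycomb_dir X1 Y1 d1 d2 -> honeycomb_dir X2 Y2 e1 e2 ->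
  hub_color X1 Y1 d1 = hub_color X2 Y2 e1 ->
  ((X1 + Y1) %% 2 = (X2 + Y2) %% 2)%Z /\ d1 = e1 /\ d2 = e2.
Proof.
have par01 X Y : ((X + Y) %% 2)%Z = 0 \/ ((X + Y) %% 2)%Z = 1 by lia.
rewrite /hub_color.
case=> [[-> ->]|[[-> ->]|[[-> [-> p1]]|[-> [-> p1]]]]];
case=> [[-> ->]|[[-> ->]|[[-> [-> p2]]|[-> [-> p2]]]]];
case: (par01 X1 Y1) => q1; case: (par01 X2 Y2) => q2;
rewrite ?q1 ?q2 //= => eq_col; lia.
Qed.

Lemma mid_color_hub X Y d1 d2 : `|d1| <= 1 -> `|d2| <= 1 ->
  mid_color (4 * X + d1) (4 * Y + d2) = hub_color X Y d1.
Proof.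
move=> d1_le1 d2_le1; rewrite /mid_color.
have -> : ((4 * X + d1 + 1) %/ 4)%Z = X by lia.
have -> : ((4 * Y + d2 + 1) %/ 4)%Z = Y by lia.
by congr hub_color; lia.
Qed.

Lemma edge_color_at i j X Y d1 d2 :
  honeycomb_dir X Y d1 d2 -> edge_at i j X Y d1 d2 ->
  edge_color [fset i; j] = hub_color X Y d1.
Proof.
move=> /honeycomb_dir_unit d_unit ij_at.
have nij : i != j by apply/eqP => eij; move: ij_at; rewrite /edge_at eij; lia.
rewrite /edge_color !sum_fset2 //.
have [-> ->] : i.1 + j.1 = 4 * X + d1 /\ i.2 + j.2 = 4 * Y + d2.
  by move: ij_at; rewrite /edge_at; lia.
by apply: mid_color_hub; lia.
Qed.

(* Distinct hubs of equal parity are at distance at least 4, and shifting both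
   by the same unit vector does not help, so the endpoints are at least 3 apart. *)
Lemma same_hub_of_close (X1 Y1 X2 Y2 d1 d2 a1 a2 b1 b2 : int) :
  ((X1 + Y1) %% 2 = (X2 + Y2) %% 2)%Z -> `|d1| + `|d2| = 1 ->
  (a1 = 2 * X1 /\ a2 = 2 * Y1) \/ (a1 = 2 * X1 + d1 /\ a2 = 2 * Y1 + d2) ->
  (b1 = 2 * X2 /\ b2 = 2 * Y2) \/ (b1 = 2 * X2 + d1 /\ b2 = 2 * Y2 + d2) ->
  `|a1 - b1| + `|a2 - b2| <= 2 -> X1 = X2 /\ Y1 = Y2.
Proof. lia. Qed.

Lemma interfere_colorable6 V E :
  finite_subgraph V E -> colorable E (interfere V E) 6.
Proof.
move=> hG; exists edge_color; split; first by move=> e _; apply: hub_color_lt.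
move=> e f eE fE nef [i [j [k [l [ei [fk /fset0Pn [w /fsetIP [w_ij w_kl]]]]]]]].
subst e f; have [a a_ij aw] := closed_edge_nbr_near hG w_ij.
have [b b_kl bw] := closed_edge_nbr_near hG w_kl.
have [X1 [Y1 [d1 [d2 [dir1 at1]]]]] := hh_adj_edge_at (hh_adj_of_edge hG eE).
have [X2 [Y2 [e1 [e2 [dir2 at2]]]]] := hh_adj_edge_at (hh_adj_of_edge hG fE).
rewrite (edge_color_at dir1 at1) (edge_color_at dir2 at2).
move=> /(hub_color_inj dir1 dir2) [par [ed1 ed2]]; subst e1 e2.
have [eX eY] : X1 = X2 /\ Y1 = Y2.
  apply: same_hub_of_close par (honeycomb_dir_unit dir1)
    (edge_at_mem at1 a_ij) (edge_at_mem at2 b_kl) _; lia.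
by subst X2 Y2; apply: nef; apply: edge_at_fset2 at1 at2.
Qed.

Lemma common_vertex_clique V E (s : seq (vtx * vtx)) (u : vtx) (k : nat) :
  uniq [seq [fset p.1; p.2] | p <- s] ->
  all (fun p => [fset p.1; p.2] \in E) s ->
  all (fun p => u \in closed_edge_nbr V E p.1 p.2) s ->
  colorable E (interfere V E) k -> (size s <= k)%N.
Proof.
move=> s_uniq /allP sE /allP s_u /(colorable_clique_size s_uniq).
rewrite size_map; apply.
  by move=> _ /mapP [p ps ->]; apply: sE.
move=> _ _ /mapP [p ps ->] /mapP [q qs ->] _.
exact: interfere_common (s_u _ ps) (s_u _ qs).
Qed.

Lemma fset2_neq_mid (p1 p2 q1 q2 r1 r2 t1 t2 : int) :
  p1 + q1 <> r1 + t1 \/ p2 + q2 <> r2 + t2 ->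
  [fset (p1, p2); (q1, q2)] != [fset (r1, r2); (t1, t2)].
Proof.
by move=> mid_neq; apply/eqP => /fset2_eq [[[? ?] [? ?]]|[[? ?] [? ?]]]; subst; lia.
Qed.

Lemma claw_colors_ge6 V E (u m1 n1 m2 n2 m3 n3 : vtx) (k : nat) :
  u \in V ->
  uniq [:: [fset u; m1]; [fset m1; n1]; [fset u; m2]; [fset m2; n2]; [fset u; m3]; [fset m3; n3]] ->
  [fset u; m1] \in E -> [fset m1; n1] \in E -> [fset u; m2] \in E -> [fset m2; n2] \in E ->
  [fset u; m3] \in E -> [fset m3; n3] \in E -> u != n1 -> u != n2 -> u != n3 ->
  colorable E (interfere V E) k -> (6 <= k)%N.
Proof.
move=> uV claw_uniq h1 h2 h3 h4 h5 h6 un1 un2 un3.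
apply: (@common_vertex_clique V E [:: (u, m1); (m1, n1); (u, m2); (m2, n2); (u, m3); (m3, n3)] u).
- exact: claw_uniq.
- by rewrite /= h1 h2 h3 h4 h5 h6.
- rewrite /=; do !(apply/andP; split) => //;
    [exact: mem_closed_edge_nbr_end | exact: mem_closed_edge_nbr_nbr uV h1 un1
    |exact: mem_closed_edge_nbr_end | exact: mem_closed_edge_nbr_nbr uV h3 un2
    |exact: mem_closed_edge_nbr_end | exact: mem_closed_edge_nbr_nbr uV h5 un3].
Qed.

Lemma hh_claw_colors_ge6 V E (a b s : int) (k : nat) :
  finite_subgraph V E -> `|s| = 1 ->
  [fset (2 * a, 2 * b); (2 * a + 1, 2 * b)] \in E ->
  [fset (2 * a + 1, 2 * b); (2 * a + 2, 2 * b)] \in E ->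
  [fset (2 * a, 2 * b); (2 * a - 1, 2 * b)] \in E ->
  [fset (2 * a - 1, 2 * b); (2 * a - 2, 2 * b)] \in E ->
  [fset (2 * a, 2 * b); (2 * a, 2 * b + s)] \in E ->
  [fset (2 * a, 2 * b + s); (2 * a, 2 * b + 2 * s)] \in E ->
  colorable E (interfere V E) k -> (6 <= k)%N.
Proof.
move=> hG s_unit.
have claw_uniq : uniq [:: [fset (2 * a, 2 * b); (2 * a + 1, 2 * b)];
    [fset (2 * a + 1, 2 * b); (2 * a + 2, 2 * b)]; [fset (2 * a, 2 * b); (2 * a - 1, 2 * b)];
    [fset (2 * a - 1, 2 * b); (2 * a - 2, 2 * b)]; [fset (2 * a, 2 * b); (2 * a, 2 * b + s)];
    [fset (2 * a, 2 * b + s); (2 * a, 2 * b + 2 * s)]].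
  rewrite uniq_pairwise /=; do !(apply/andP; split) => //;
    by apply: fset2_neq_mid; lia.
have [un1 un2 un3] : [/\ (2 * a, 2 * b) != (2 * a + 2, 2 * b),
    (2 * a, 2 * b) != (2 * a - 2, 2 * b) & (2 * a, 2 * b) != (2 * a, 2 * b + 2 * s)].
  by rewrite !xpair_eqE; split; lia.
move=> h1 h2 h3 h4 h5 h6.
exact: (claw_colors_ge6 (edge_end_in hG h1) claw_uniq h1 h2 h3 h4 h5 h6 un1 un2 un3).
Qed.

Lemma cell_edge_mem E x y (p q : vtx) :
  contains_cell E x y -> cell_vertex x y p -> cell_vertex x y q ->
  `|p.1 - q.1| + `|p.2 - q.2| = 1 -> [fset p; q] \in E.
Proof. by move=> cell_xy hp hq hpq; apply: cell_xy; exists p, q. Qed.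

Definition right_or_upper_face (x y x' y' : int) : Prop :=
  (x' = x + 2 /\ y' = y) \/ (x' = x + 1 /\ y' = y + 1) \/ (x' = x - 1 /\ y' = y + 1).

Lemma next_cells_colors_ge6 V E (x y x' y' : int) (k : nat) :
  finite_subgraph V E -> right_or_upper_face x y x' y' ->
  contains_cell E x y -> contains_cell E x' y' ->
  colorable E (interfere V E) k -> (6 <= k)%N.
Proof.
move=> hG next cell_xy cell_xy'.
have in_cells (p q : vtx) :
    (cell_vertex x y p /\ cell_vertex x y q) \/ (cell_vertex x' y' p /\ cell_vertex x' y' q) ->
    `|p.1 - q.1| + `|p.2 - q.2| = 1 -> [fset p; q] \in E.
  by case=> -[hp hq]; [apply: cell_edge_mem cell_xy hp hq | apply: cell_edge_mem cell_xy' hp hq].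
(* Centre the claw at an endpoint of the side shared by the two cells. *)
case: next => [|[|]] [? ?]; subst x' y';
  [apply: (@hh_claw_colors_ge6 V E (x + 2) y 1)
  |apply: (@hh_claw_colors_ge6 V E (x + 2) (y + 1) (-1))
  |apply: (@hh_claw_colors_ge6 V E x (y + 1) (-1))] => //;
  apply: in_cells; rewrite /cell_vertex /=; lia.
Qed.

Lemma two_cells_colors_ge6 V E (k : nat) :
  finite_subgraph V E -> contains_two_connected_cells E ->
  colorable E (interfere V E) k -> (6 <= k)%N.
Proof.
move=> hG [x [y [x' [y' [[k1 face_xy] [[k2 face_xy'] [neq_faces [[e [e_xy e_xy']] [cell_xy cell_xy']]]]]]]]].
case: e_xy => p [q [ep [p_xy _]]]; case: e_xy' => p' [q' [ep' [p'_xy' [q'_xy' _]]]].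
have p_xy' : cell_vertex x' y' p.
  by have /fset2P[->|->] : p \in [fset p'; q'] by rewrite -ep' ep fset21.
have : right_or_upper_face x y x' y' \/ right_or_upper_face x' y' x y.
  have neq_xy : x <> x' \/ y <> y'.
    by case: (eqVneq x x') => [exx'|/eqP]; [right => eyy'; apply: neq_faces; rewrite exx' eyy' | left].
  by move: p_xy p_xy'; rewrite /cell_vertex /right_or_upper_face; lia.
case=> [next|next].
  exact: next_cells_colors_ge6 hG next cell_xy cell_xy'.
exact: next_cells_colors_ge6 hG next cell_xy' cell_xy.
Qed.

Unset Implicit Arguments.
Local Close Scope ring_scope.

Theorem lemma1 (V : {fset vtx}) (E : {fset {fset vtx}}) :
  finite_subgraph V E ->
  contains_two_connected_cells E ->
  chromatic_number E (interfere V E) 6.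
Proof.
move=> hG two_cells; split; first exact: interfere_colorable6.
by move=> k; apply: two_cells_colors_ge6.
Qed.
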